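(* Let $\mathbf{x}=x_1,\ldots,x_n$, $\mathbf{u}=u_1,\ldots,u_m$ be differential indeterminates over $\mathbb{C}$ and $\mathbf{f}=f_1,\ldots,f_n$, $\mathbf{g}=g_1,\ldots,g_s\in\mathbb{C}[\mathbf{x},\mathbf{u}]$. Assume that $1\in[\dot{\mathbf{x}}-\mathbf{f},\mathbf{g}]\subseteq\mathbb{C}\{\mathbf{x},\mathbf{u}\}$ and that the algebraic variety $V(\mathbf{g})\subset\mathbb{C}^{n+m}$ is nonempty. Let $I_0\subset I_1\subset\cdots$ and $\rho$ be as defined in the context. Fix $i\in\{0,\ldots,\rho\}$ and let $\mathbf{g}_i\subset\mathbb{C}[\mathbf{x},\mathbf{u}]$ be any finite system of generators of $I_i$. Then $1\in[\dot{\mathbf{x}}-\mathbf{f},\mathbf{g}_i]$ (i.e. the system $\dot{\mathbf{x}}-\mathbf{f}=0,\ \mathbf{g}_i=0$ has no solution). Moreover, for $i=\rho$, $1$ belongs to the polynomial ideal $(\dot{\mathbf{x}}-\mathbf{f},\mathbf{g}_\rho,\dot{\mathbf{g}}_\rho)\subset\mathbb{C}[\mathbf{x},\dot{\mathbf{x}},\mathbf{u},\dot{\mathbf{u}}]$.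
   Context: $\mathbb{C}\{\mathbf{x},\mathbf{u}\}$ is the differential polynomial ring with derivation $x_j^{(p)}\mapsto x_j^{(p+1)}$, $u_k^{(p)}\mapsto u_k^{(p+1)}$ and $\mathbb{C}$ as constants; $\dot z=z^{(1)}$, $[\cdot]$ is the differential ideal generated and $(\cdot)$ the ordinary polynomial ideal. For $h\in\mathbb{C}[\mathbf{x},\mathbf{u}]$ put $\widetilde h:=\sum_{j}\frac{\partial h}{\partial x_j}f_j+\sum_k\frac{\partial h}{\partial u_k}\dot u_k\in\mathbb{C}[\mathbf{x},\mathbf{u},\dot{\mathbf{u}}]$, and for an ideal $I\subset\mathbb{C}[\mathbf{x},\mathbf{u}]$ let $\widetilde I\subset\mathbb{C}[\mathbf{x},\mathbf{u},\dot{\mathbf{u}}]$ be the ideal generated by $I$ and all $\widetilde h$, $h\in I$. Define $I_0:=\sqrt{(\mathbf{g})}$ and $I_{i+1}:=\sqrt{\widetilde I_i\cap\mathbb{C}[\mathbf{x},\mathbf{u}]}$, and $\rho:=\min\{i\in\mathbb{Z}_{\ge0}:\dim V(I_i)\le 0\}$, where $V(I)$ is the zero set of $I$ in $\mathbb{C}^{n+m}$ and the empty set has dimension $-1$. *)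

From HB Require Import structures.
From mathcomp Require Import all_boot all_order all_algebra.
From mathcomp Require Import finmap.
From mathcomp Require Import Rstruct.
From mathcomp Require Import complex.
From mathcomp Require Import monalg.
From mathcomp Require Import mpoly.

Set Implicit Arguments.
Unset Strict Implicit.
Unset Printing Implicit Defensive.
Import GRing.Theory.
Local Open Scope ring_scope.

Notation CC := (Rdefinitions.R[i]).

Section Ideals.
Variable A : comNzRingType.

Definition ideal_gen (S : A -> Prop) : A -> Prop :=
  fun p => exists r : seq (A * A),
    (forall q, List.In q r -> S q.2) /\ p = \sum_(q <- r) q.1 * q.2.

Definition radical (I : A -> Prop) : A -> Prop := fun p => exists k : nat, I (p ^+ k).

Definition is_ideal (J : A -> Prop) : Prop :=
  J 0 /\ (forall a b, J a -> J b -> J (a + b)) /\ (forall a b, J b -> J (a * b)).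

Definition prime_ideal (P : A -> Prop) : Prop :=
  is_ideal P /\ ~ P 1 /\ (forall a b, P (a * b) -> P a \/ P b).

Definition krull_dim_le (J : A -> Prop) (d : nat) : Prop :=
  ~ exists P : nat -> A -> Prop,
      (forall k, (k <= d.+1)%N -> prime_ideal (P k) /\ (forall a, J a -> P k a)) /\
      (forall k, (k < d.+1)%N ->
         (forall a, P k a -> P k.+1 a) /\ (exists a, P k.+1 a /\ ~ P k a)).

Definition diff_ideal_gen (delta : A -> A) (S : A -> Prop) : A -> Prop :=
  fun p => forall J : A -> Prop, is_ideal J -> (forall a, J a -> J (delta a)) ->
    (forall a, S a -> J a) -> J p.
End Ideals.

Section Varieties.
Variable N : nat.
Definition zeroset (I : (mpoly.mpoly (N) CC) -> Prop) : ('I_N -> CC) -> Prop :=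
  fun a => forall p, I p -> p.@[a] = 0.
Definition vanishing (V : ('I_N -> CC) -> Prop) : (mpoly.mpoly (N) CC) -> Prop :=
  fun p => forall a, V a -> p.@[a] = 0.
(* dim V <= d, where dim V is the Krull dimension of the coordinate ring
   C[x]/I(V)  (the empty set has dimension -1) *)
Definition variety_dim_le (V : ('I_N -> CC) -> Prop) (d : nat) : Prop :=
  krull_dim_le (vanishing V) d.
End Varieties.

Section Setting.
Variables (n m : nat).

(* ---- C[x,u] = (mpoly.mpoly (n+m) CC): x_j = 'X_(lshift m j), u_k = 'X_(rshift n k) *)
Definition xvar (j : 'I_n) : 'I_(n + m) := lshift m j.
Definition uvar (k : 'I_m) : 'I_(n + m) := rshift n k.

(* ---- C[x,u,u'] = (mpoly.mpoly ((n+m)+m) CC): old variables first, then u'_k *)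
Definition iota1 (p : (mpoly.mpoly (n + m) CC)) : (mpoly.mpoly ((n + m) + m) CC) :=
  mpoly.mmap (@mpolyC _ CC) (fun v => 'X_(lshift m v)) p.
Definition udot1 (k : 'I_m) : (mpoly.mpoly ((n + m) + m) CC) := 'X_(rshift (n + m) k).

Variable f : 'I_n -> (mpoly.mpoly (n + m) CC).

Definition tilde (h : (mpoly.mpoly (n + m) CC)) : (mpoly.mpoly ((n + m) + m) CC) :=
  \sum_(j < n) iota1 (mderiv (xvar j) h) * iota1 (f j)
  + \sum_(k < m) iota1 (mderiv (uvar k) h) * udot1 k.

Definition tilde_ideal (I : (mpoly.mpoly (n + m) CC) -> Prop) : (mpoly.mpoly ((n + m) + m) CC) -> Prop :=
  ideal_gen (fun q => exists h, I h /\ (q = iota1 h \/ q = tilde h)).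

(* I~ intersected with C[x,u] *)
Definition next_ideal (I : (mpoly.mpoly (n + m) CC) -> Prop) : (mpoly.mpoly (n + m) CC) -> Prop :=
  radical (fun h => tilde_ideal I (iota1 h)).

Variables (s : nat) (g : 'I_s -> (mpoly.mpoly (n + m) CC)).

Fixpoint Iseq (i : nat) : (mpoly.mpoly (n + m) CC) -> Prop :=
  match i with
  | 0 => radical (ideal_gen (fun p => exists k, p = g k))
  | i'.+1 => next_ideal (Iseq i')
  end.

(* ---- C[x,x',u,u'] = (mpoly.mpoly ((n+m)+(n+m)) CC): v in first block, v' in second *)
Definition iota2 (p : (mpoly.mpoly (n + m) CC)) : (mpoly.mpoly ((n + m) + (n + m)) CC) :=
  mpoly.mmap (@mpolyC _ CC) (fun v => 'X_(lshift (n + m) v)) p.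
Definition dvar2 (v : 'I_(n + m)) : (mpoly.mpoly ((n + m) + (n + m)) CC) :=
  'X_(rshift (n + m) v).
Definition dot2 (p : (mpoly.mpoly (n + m) CC)) : (mpoly.mpoly ((n + m) + (n + m)) CC) :=
  \sum_(v < n + m) iota2 (mderiv v p) * dvar2 v.

(* ---- the differential polynomial ring C{x,u}: polynomials in the
   variables v^(p), v in 'I_(n+m) (the x's and u's), p : nat *)
Definition DVar : choiceType := ('I_(n + m) * nat)%type.
Definition DMonom : monalg.ConomialDef.type := monalg.cmonom DVar.
Definition DPoly : comNzRingType := @monalg.malg DMonom CC.
Definition dvar (v : 'I_(n + m)) (p : nat) : DPoly :=
  monalg.mkmalgU (monalg.ucm ((v, p) : DVar)) 1.
Definition dconst (c : CC) : DPoly := monalg.mkmalgU (monalg.onecm DVar) c.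
Definition iotaD (p : (mpoly.mpoly (n + m) CC)) : DPoly := mpoly.mmap dconst (fun v => dvar v 0) p.
(* the derivation v^(p) |-> v^(p+1), extended by the Leibniz rule *)
Definition dmonom (k : DMonom) : DPoly :=
  \sum_(w <- finsupp k)
     ((k w)%:R * monalg.mkmalgU (monalg.divcm k (monalg.ucm w)) 1 * dvar w.1 w.2.+1).
Definition delta (q : DPoly) : DPoly := monalg.mmap dconst dmonom q.

Definition dideal_sys (G : (mpoly.mpoly (n + m) CC) -> Prop) : DPoly -> Prop :=
  diff_ideal_gen delta
    (fun q => (exists j, q = dvar (xvar j) 1 - iotaD (f j)) \/ (exists p, G p /\ q = iotaD p)).
End Setting.

(* If the polynomial system [x' = f, g_rho = 0, g_rho' = 0] had a solution
   [(a, b)], then [a] would be a point of the zero-dimensional variety V(I_rho),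
   hence isolated, and the vector [b], annihilated by the differential at [a] of
   every element of the radical ideal I_rho, would have to vanish. Its
   [x']-coordinates being [f(a)], the constant trajectory at [a] would then solve
   [x' = f, g = 0] (as g lies in I_rho), contradicting [1 \in [x' - f, g]]. The
   Nullstellensatz, which over the uncountable field C follows from a dimension
   count, turns this absence of solutions into [1] lying in the ideal. The first
   claim only uses [g \subset I_0 \subset I_i]. *)

From Pilot Require Import Defs.
From HB Require Import structures.
From mathcomp Require Import all_boot all_order all_algebra.
From mathcomp Require Import finmap Rstruct complex monalg mpoly.
From mathcomp Require classical_sets.
From Stdlib Require Import Classical ClassicalEpsilon Rdefinitions Raxioms RIneq Lra.
From mathcomp Require Import ring.
Delimit Scope nat_scope with N.
Set Implicit Arguments.
Unset Strict Implicit.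
Unset Printing Implicit Defensive.
Import GRing.Theory.
Local Open Scope ring_scope.

(** * Ideals avoiding a multiplicative set *)

Section Ideals.
Variable A : comNzRingType.

Section OneIdeal.
Variables (I : A -> Prop) (idI : is_ideal I).

Lemma ideal0 : I 0.
Proof. by case: idI. Qed.

Lemma idealD {a b} : I a -> I b -> I (a + b).
Proof. by case: idI => _ [+ _]; apply. Qed.

Lemma idealMl {a b} : I b -> I (a * b).
Proof. by case: idI => _ [_]; apply. Qed.

Lemma idealMr {a b} : I a -> I (a * b).
Proof. by rewrite mulrC; apply: idealMl. Qed.

Lemma idealB {a b} : I a -> I b -> I (a - b).
Proof. by move=> Ia Ib; apply: idealD => //; rewrite -mulN1r; apply: idealMl. Qed.

Lemma ideal_sum (T : Type) (r : seq T) (F : T -> A) :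
  (forall t, List.In t r -> I (F t)) -> I (\sum_(t <- r) F t).
Proof.
elim: r => [|t r IH] Ir; first by rewrite big_nil; apply: ideal0.
by rewrite big_cons; apply: idealD; [apply: Ir; left | apply: IH => u ru; apply: Ir; right].
Qed.

Lemma ideal_congD x y x' y' : I (x - y) -> I (x' - y') -> I ((x + x') - (y + y')).
Proof. by move=> ? ?; rewrite opprD addrACA; apply: idealD. Qed.

Lemma ideal_congM x y x' y' : I (x - y) -> I (x' - y') -> I (x * x' - y * y').
Proof.
move=> ? ?; rewrite (_ : x * x' - y * y' = (x - y) * x' + y * (x' - y')); last by ring.
by apply: idealD; [apply: idealMr | apply: idealMl].
Qed.

Lemma ideal_congX x y k : I (x - y) -> I (x ^+ k - y ^+ k).
Proof.
move=> Ixy; elim: k => [|k IH]; first by rewrite !expr0 subrr; apply: ideal0.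
by rewrite !exprS; apply: ideal_congM.
Qed.

End OneIdeal.

Lemma ideal_gen_ideal (S : A -> Prop) : is_ideal (ideal_gen S).
Proof.
split; first by exists [::]; rewrite big_nil.
split.
  move=> a b [r1 [S1 ->]] [r2 [S2 ->]]; exists (r1 ++ r2); rewrite big_cat; split => //.
  by move=> q /(List.in_app_or r1 r2 q) [?|?]; [apply: S1|apply: S2].
move=> a b [r [Sr ->]]; exists (map (fun q => (a * q.1, q.2)) r); split.
  by move=> q /(List.in_map_iff _ r q) [q0 [<- /Sr]].
by rewrite big_map mulr_sumr; apply: eq_bigr => q _; rewrite mulrA.
Qed.

Lemma mem_ideal_gen (S : A -> Prop) a : S a -> ideal_gen S a.
Proof. by move=> Sa; exists [:: (1, a)]; rewrite big_seq1 mul1r; split => // q [<-|]. Qed.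

Lemma ideal_gen_min (S J : A -> Prop) : is_ideal J -> (forall a, S a -> J a) ->
  forall a, ideal_gen S a -> J a.
Proof.
by move=> idJ SJ a [r [Sr ->]]; apply: ideal_sum => // q /Sr /SJ; apply: idealMl.
Qed.

Lemma is_ideal_eq (I J : A -> Prop) : (forall a, I a <-> J a) -> is_ideal J -> is_ideal I.
Proof.
move=> IJ [J0 [JD JM]]; split; first exact/IJ.
by split => [a b /IJ ? /IJ ?|a b /IJ ?]; apply/IJ; [apply: JD|apply: JM].
Qed.

Definition avoiding (I S X : A -> Prop) : Prop :=
  is_ideal X /\ (forall x, I x -> X x) /\ (forall s, S s -> ~ X s).

(* Maximality in the form used below: adjoining any [y] outside [M] meets [S]. *)
Definition maximal_avoiding (I S M : A -> Prop) : Prop :=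
  avoiding I S M /\ forall y, ~ M y -> exists s z, S s /\ M (s - z * y).

Definition powers (p : A) : A -> Prop := fun s => exists k, s = p ^+ k.

Lemma powers1 p : powers p 1.
Proof. by exists 0%N. Qed.

Lemma powersM p a b : powers p a -> powers p b -> powers p (a * b).
Proof. by move=> [k ->] [l ->]; exists (k + l)%N; rewrite exprD. Qed.

Section Avoiding.
Variables (I S : A -> Prop).
Hypotheses (S1 : S 1) (SM : forall a b, S a -> S b -> S (a * b)).

Lemma avoiding_bigcup (F : classical_sets.set (A -> Prop)) X0 :
  (forall X, F X -> (exists x, X x) -> avoiding I S X) ->
  classical_sets.total_on F classical_sets.subset -> F X0 -> avoiding I S X0 ->
  avoiding I S (classical_sets.bigcup F (fun X => X)).
Proof.
move=> Fav Ftot FX0 [idX0 [IX0 _]].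
have Fmem x : classical_sets.bigcup F (fun X => X) x ->
    exists X, [/\ F X, avoiding I S X & X x].
  by case=> X FX Xx; exists X; split => //; apply: Fav => //; exists x.
split; last split.
- split; first by exists X0 => //; apply: ideal0.
  split=> [a b /Fmem [X [FX [idX _] Xa]] /Fmem [Y [FY [idY _] Yb]]|
           a b /Fmem [X [FX [idX _] Xb]]].
    have [XY|YX] := Ftot X Y FX FY.
      by exists Y => //; apply: idealD => //; apply: XY.
    by exists X => //; apply: idealD => //; apply: YX.
  by exists X => //; apply: idealMl.
- by move=> x Ix; exists X0 => //; apply: IX0.
- by move=> s Ss /Fmem [X [_ [_ [_ XS]] Xs]]; apply: (XS s).
Qed.

Lemma avoiding_exists_maximal : avoiding I S I ->
  exists M, avoiding I S M /\ forall B, classical_sets.proper M B -> ~ avoiding I S B.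
Proof.
move=> avI.
(* Zorn's lemma also asks for the union of the empty chain, hence the empty set in [P]. *)
pose P X := (forall x, ~ X x) \/ avoiding I S X.
have [M [PM Mmax]] : exists M, P M /\ forall B, classical_sets.proper M B -> ~ P B.
  apply: classical_sets.Zorn_bigcup => F FP Ftot.
  have [[X0 [FX0 [x X0x]]]|] := classic (exists X, F X /\ exists x, X x); last first.
    by move=> Fempty; left => x [X FX Xx]; apply: Fempty; exists X; split => //; exists x.
  have Fav X : F X -> (exists x, X x) -> avoiding I S X.
    by move=> FX [y Xy]; case: (FP X FX) => // /(_ y).
  by right; apply: (avoiding_bigcup Fav Ftot FX0); apply: Fav => //; exists x.
case: PM => [Mempty|avM]; last by exists M; split => // B MB avB; apply: (Mmax B) => //; right.
case: (Mmax I); last by right.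
split; first by move=> x /Mempty.
by move=> IM; apply: (Mempty 0); apply: IM; case: avI => idI _; apply: ideal0.
Qed.

Lemma avoiding_adjoin M y : avoiding I S M ->
  (forall s z, S s -> ~ M (s - z * y)) ->
  avoiding I S (fun x => exists m z, M m /\ x = m + z * y).
Proof.
move=> [idM [IM MS]] My; split; last split.
- split; first by exists 0, 0; rewrite mul0r addr0; split => //; apply: ideal0.
  split.
    move=> _ _ [m1 [z1 [M1 ->]]] [m2 [z2 [M2 ->]]]; exists (m1 + m2), (z1 + z2).
    by split; [apply: idealD | rewrite mulrDl addrACA].
  move=> a _ [m [z [Mm ->]]]; exists (a * m), (a * z).
  by split; [apply: idealMl | rewrite mulrDr mulrA].
- by move=> x Ix; exists x, 0; rewrite mul0r addr0; split => //; apply: IM.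
- by move=> s Ss [m [z [Mm Es]]]; apply: (My s z Ss); rewrite Es addrK.
Qed.

Lemma maximal_avoiding_exists : avoiding I S I -> exists M, maximal_avoiding I S M.
Proof.
move=> /avoiding_exists_maximal [M [avM Mmax]]; exists M; split => // y My.
apply: NNPP => noS.
have {}noS s z : S s -> ~ M (s - z * y) by move=> Ss Msz; apply: noS; exists s, z.
apply: (Mmax _ _ (avoiding_adjoin avM noS)).
split; first by move=> x Mx; exists x, 0; rewrite mul0r addr0.
move=> MyM; apply: My; apply: MyM; exists 0, 1; rewrite add0r mul1r; split => //.
by case: avM => idM _; apply: ideal0.
Qed.

Lemma maximal_avoiding_prime M : maximal_avoiding I S M -> prime_ideal M.
Proof.
move=> [[idM [_ MS]] Mmax]; split => //; split; first exact: MS.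
move=> a b Mab; apply: NNPP => /not_or_and [Ma Mb].
have [s1 [z1 [S1' M1]]] := Mmax a Ma; have [s2 [z2 [S2' M2]]] := Mmax b Mb.
apply: (MS (s1 * s2)); first exact: SM.
rewrite (_ : s1 * s2 = (s1 - z1 * a) * s2 + z1 * (s2 - z2 * b) * a + z1 * z2 * (a * b));
  last by ring.
apply: idealD => //; last exact: idealMl.
by apply: idealD => //; apply: idealMr => //; apply: idealMl.
Qed.
End Avoiding.
End Ideals.

Lemma ideal_gen_rmorph (A B : comNzRingType) (phi : {rmorphism A -> B})
    (S : A -> Prop) (J : B -> Prop) :
  is_ideal J -> (forall a, S a -> J (phi a)) -> forall a, ideal_gen S a -> J (phi a).
Proof.
move=> idJ SJ _ [r [Sr ->]]; rewrite rmorph_sum; apply: ideal_sum => // q rq.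
by rewrite rmorphM; apply: (idealMl idJ); apply/SJ/Sr.
Qed.

(** * Uncountability of C *)

Section Trisection.
Local Open Scope R_scope.

Definition trisect (ab : R * R) (x : R) : R * R :=
  let: (a, b) := ab in
  if Rlt_dec x (a + 2 * (b - a) / 3) then (a + 2 * (b - a) / 3, b) else (a, a + (b - a) / 3).
Arguments trisect : simpl never.

Lemma trisect_spec {a b} x : a < b -> let cd := trisect (a, b) x in
  a <= cd.1 /\ cd.1 < cd.2 /\ cd.2 <= b /\ (x < cd.1 \/ cd.2 < x).
Proof. by rewrite /trisect => ab /=; case: Rlt_dec => /= ?; lra. Qed.

Fixpoint trisect_seq (u : nat -> R) (k : nat) : R * R :=
  if k is k'.+1 then trisect (trisect_seq u k') (u k') else (0, 1).

Lemma trisect_seq_lt u k : (trisect_seq u k).1 < (trisect_seq u k).2.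
Proof.
elim: k => [|k] /=; first lra.
by case: (trisect_seq u k) => a b /= /(trisect_spec (u k)) /=; lra.
Qed.

Lemma trisect_seq_mono u k l : (k <= l)%N ->
  (trisect_seq u k).1 <= (trisect_seq u l).1 /\ (trisect_seq u l).2 <= (trisect_seq u k).2.
Proof.
elim: l => [|l IH]; first by rewrite leqn0 => /eqP ->; lra.
rewrite leq_eqVlt => /orP [/eqP ->|]; first lra.
rewrite ltnS => /IH /=; have := trisect_seq_lt u l.
by case: (trisect_seq u l) => a b /= /(trisect_spec (u l)) /=; lra.
Qed.

(* The point common to all the nested intervals [trisect_seq u k] is missed by [u]. *)
Lemma R_uncountable (u : nat -> R) : exists r, forall k, u k <> r.
Proof.
pose E x := exists k, x = (trisect_seq u k).1.
have boundE : bound E.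
  exists 1 => _ [k ->]; have := trisect_seq_mono u (leq0n k).
  by have := trisect_seq_lt u k; simpl; lra.
have [r [ubr lubr]] := completeness E boundE (ex_intro _ 0 (ex_intro _ 0%N erefl)).
have lo k : (trisect_seq u k).1 <= r by apply: ubr; exists k.
have hi k : r <= (trisect_seq u k).2.
  apply: lubr => _ [l ->]; have [kl|/ltnW lk] := leqP k l.
    by have := trisect_seq_mono u kl; have := trisect_seq_lt u l; lra.
  by have := trisect_seq_mono u lk; have := trisect_seq_lt u k; lra.
exists r => k ukr; move: (lo k.+1) (hi k.+1) => /=.
have := trisect_seq_lt u k; case: (trisect_seq u k) => a b /= /(trisect_spec (u k)) /=.
by rewrite ukr; lra.
Qed.
End Trisection.

Lemma CC_uncountable (u : nat -> CC) : exists c, forall k, u k <> c.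
Proof.
have [r ur] := R_uncountable (fun k => complex.Re (u k)).
by exists (complex.Complex r 0) => k ukr; apply: (ur k); rewrite ukr.
Qed.

Lemma seq_cover_bounded (T : eqType) (P : T -> Prop) (B : nat) :
  (forall l, uniq l -> (forall c, c \in l -> P c) -> (size l <= B)%N) ->
  exists L : seq T, forall c, P c -> c \in L.
Proof.
move=> PB; apply: NNPP => noL.
have grow (l : seq T) : exists c, P c /\ c \notin l.
  apply: NNPP => nogrow; apply: noL; exists l => c Pc.
  by apply: NNPP => /negP cl; apply: nogrow; exists c.
have long k : exists l : seq T, [/\ uniq l, forall c, c \in l -> P c & size l = k].
  elim: k => [|k [l [ul Pl <-]]]; first by exists [::].
  have [c [Pc cl]] := grow l; exists (c :: l); split; rewrite /= ?cl ?ul //.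
  by move=> d; rewrite inE => /orP [/eqP ->|/Pl].
have [l [ul Pl sl]] := long B.+1.
by have := PB l ul Pl; rewrite sl ltnn.
Qed.

(* Bounded fibers would each be enumerated by a list, and the pairs
   (key, position in the list) would then enumerate C. *)
Lemma CC_fibers_unbounded (K : countType) (key : CC -> K) (B : K -> nat) :
  ~ (forall k l, uniq l -> (forall c, c \in l -> key c = k) -> (size l <= B k)%N).
Proof.
move=> keyB.
have [L coverL] := choice _ (fun k => seq_cover_bounded (keyB k)).
pose u i : CC := if @choice.unpickle (K * nat)%type i is Some (k, j) then nth 0 (L k) j else 0.
have [c uc] := CC_uncountable u.
apply: (uc (choice.pickle (key c, index c (L (key c))))).
by rewrite /u choice.pickleK nth_index //; apply: coverL.
Qed.

(** * The Nullstellensatz *)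

Section Nullstellensatz.
Variable N : nat.
Local Notation P := {mpoly CC[N]}.

Lemma msize_le_lin_dep d (z : 'I_(#|{: 'X_{1..N < d}}|).+1 -> P) :
  (forall j, (msize (z j) <= d)%N) ->
  exists2 lam : 'I_(#|{: 'X_{1..N < d}}|).+1 -> CC,
    exists j, lam j != 0 & \sum_j lam j *: z j = 0.
Proof.
move=> zd; set D := #|{: 'X_{1..N < d}}|.
pose A : 'M[CC]_(D.+1, D) := \matrix_(j, k) (z j)@_(val (enum_val k)).
have : kermx A != 0.
  by rewrite -mxrank_eq0 mxrank_ker subn_eq0 -ltnNge ltnS rank_leq_col.
case/matrix0Pn => i [j kerij]; exists (fun j => kermx A i j); first by exists j.
apply/mpolyP => m; rewrite mcoeff0 raddf_sum /=.
under eq_bigr do rewrite mcoeffZ.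
have [md|dm] := ltnP (mdeg m) d; last first.
  apply: big1 => k _; rewrite memN_msupp_eq0 ?mulr0 //.
  by apply: msize_mdeg_ge; apply: leq_trans dm.
pose bm : 'X_{1..N < d} := BMultinom md.
have := congr1 (fun B : 'M[CC]_(D.+1, D) => B i (enum_rank bm : 'I_D)) (mulmx_ker A).
rewrite [LHS]mxE [RHS]mxE => kerA; rewrite -[RHS]kerA; apply: eq_bigr => k _.
by rewrite [A k _]mxE enum_rankK.
Qed.

Lemma ideal_cong_meval (M : P -> Prop) (a : 'I_N -> CC) : is_ideal M ->
  (forall i, M ('X_i - (a i)%:MP)) -> forall q : P, M (q - (q.@[a])%:MP).
Proof.
move=> idM Ma q.
have congB := big_ind2 (fun x y => M (x - y)).
rewrite {1}(mpolyE q) mevalE rmorph_sum.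
apply: (congB) => [|x1 x2 y1 y2|m _]; first by rewrite subrr; apply: ideal0.
  exact: ideal_congD.
rewrite -mul_mpolyC rmorphM /= mpolyXE_id rmorph_prod.
apply: ideal_congM => //; first by rewrite subrr; apply: ideal0.
apply: (congB) => [|x1 x2 y1 y2|j _]; first by rewrite subrr; apply: ideal0.
  exact: ideal_congM.
by rewrite rmorphXn; apply: ideal_congX.
Qed.

Lemma prime_ideal_XsubC (M : P -> Prop) (i : 'I_N) (Q : {poly CC}) :
  prime_ideal M -> Q != 0 -> M (map_poly (@mpolyC N CC) Q).['X_i] ->
  exists c, M ('X_i - c%:MP).
Proof.
move=> [idM [M1 Mprime]] Q0; have [rs ->] := closed_field_poly_normal Q.
rewrite map_polyZ hornerZ rmorph_prod horner_prod.
case/Mprime => [Mlc|].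
  have lc0 : lead_coef Q != 0 by rewrite lead_coef_eq0.
  case: M1; rewrite (_ : 1 = (lead_coef Q)^-1%:MP * (lead_coef Q)%:MP).
    exact: idealMl.
  by rewrite -rmorphM mulVf // rmorph1.
clear Q0; elim: rs => [|r rs IH]; first by rewrite big_nil.
rewrite big_cons => /Mprime [|//].
by rewrite /= map_polyXsubC hornerXsubC; exists r.
Qed.

Lemma lagrange_comb_neq0 K (cs : 'I_K -> CC) (lam : 'I_K -> CC) j0 :
  injective cs -> lam j0 != 0 ->
  \sum_j lam j *: \prod_(l | l != j) ('X - (cs l)%:P) != 0.
Proof.
move=> csinj lamj0; apply/negP => /eqP /(congr1 (horner^~ (cs j0))).
rewrite horner0 horner_sum (bigD1 j0) //= [X in _ + X]big1 => [|j j0j]; last first.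
  by rewrite hornerZ horner_prod (bigD1 j0) 1?eq_sym //= hornerXsubC subrr mul0r mulr0.
rewrite addr0 hornerZ horner_prod => /eqP; rewrite mulf_eq0 (negbTE lamj0) /=.
apply/negP/prodf_neq0 => l lj0.
by rewrite hornerXsubC subr_eq0; apply: contra lj0 => /eqP/csinj ->.
Qed.

(* Multiplying [pk = z_j (X_i - c_j) mod M] by the Lagrange-type products
   [prod_(l != j) (X_i - c_l)] and summing with weights [lam] kills the [z_j]. *)
Lemma prime_ideal_lin_dep_XsubC (M : P -> Prop) (i : 'I_N) K (cs : 'I_K -> CC)
    (lam : 'I_K -> CC) (z : 'I_K -> P) (pk : P) :
  prime_ideal M -> injective cs -> (exists j, lam j != 0) -> \sum_j lam j *: z j = 0 ->
  (forall j, M (pk - z j * ('X_i - (cs j)%:MP))) -> ~ M pk ->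
  exists c, M ('X_i - c%:MP).
Proof.
move=> Mprime csinj [j0 lamj0] zdep Mz Mpk.
have [idM [_ Mmul]] := Mprime.
pose R j := \prod_(l | l != j) ('X_i - (cs l)%:MP).
pose Q : {poly CC} := \sum_j lam j *: \prod_(l | l != j) ('X - (cs l)%:P).
have QX : (map_poly (@mpolyC N CC) Q).['X_i] = \sum_j lam j *: R j.
  rewrite rmorph_sum horner_sum; apply: eq_bigr => j _.
  rewrite /= map_polyZ hornerZ rmorph_prod horner_prod mul_mpolyC; congr (_ *: _).
  by apply: eq_bigr => l _; rewrite /= map_polyXsubC hornerXsubC.
have zR0 : \sum_j lam j *: (z j * ('X_i - (cs j)%:MP) * R j) = 0.
  have : (\sum_j lam j *: z j) * \prod_l ('X_i - (cs l)%:MP) = 0 by rewrite zdep mul0r.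
  rewrite mulr_suml => zR; rewrite -[RHS]zR; apply: eq_bigr => j _.
  by rewrite (bigD1 j) //= -scalerAl mulrA.
have MpkQ : M (pk * (map_poly (@mpolyC N CC) Q).['X_i]).
  rewrite QX (_ : pk * _ = \sum_j lam j *: ((pk - z j * ('X_i - (cs j)%:MP)) * R j)).
    apply: ideal_sum => // j _; rewrite -mul_mpolyC; apply: (idealMl idM).
    by rewrite mulrC; apply: (idealMl idM).
  rewrite [RHS](eq_bigr (fun j =>
    lam j *: (pk * R j) - lam j *: (z j * ('X_i - (cs j)%:MP) * R j))).
    by rewrite sumrB zR0 subr0 mulr_sumr; apply: eq_bigr => j _; rewrite scalerAr.
  by move=> j _; rewrite mulrBl scalerBr.
apply: (prime_ideal_XsubC Mprime (lagrange_comb_neq0 csinj lamj0)).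
by case: (Mmul _ _ MpkQ).
Qed.

(* If no [X_i - c] were in [M], each [c] would give [p^k = z (X_i - c)] mod [M];
   uncountably many [c] share [k] and [msize z], and more of the [z] than the
   dimension of the polynomials of that size are linearly dependent. *)
Lemma maximal_avoiding_XsubC (I M : P -> Prop) (p : P) (i : 'I_N) :
  maximal_avoiding I (powers p) M -> exists c, M ('X_i - c%:MP).
Proof.
move=> Mmax; have Mprime := maximal_avoiding_prime (powers1 p) (@powersM _ p) Mmax.
case: Mmax => [[idM [_ Mp]] Mmax]; apply: NNPP => noc.
have kz_ex c : exists kz : nat * P, M (p ^+ kz.1 - kz.2 * ('X_i - c%:MP)).
  have /Mmax [_ [z [[k ->] Mz]]] : ~ M ('X_i - c%:MP) by move=> Mc; apply: noc; exists c.
  by exists (k, z).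
have [kz Mkz] := choice _ kz_ex.
apply: (@CC_fibers_unbounded _ (fun c => ((kz c).1, msize (kz c).2))
                               (fun kd => #|{: 'X_{1..N < kd.2}}|)).
move=> [k d] l ul lkey /=; rewrite leqNgt; apply/negP => lD.
pose cs (j : 'I_(#|{: 'X_{1..N < d}}|).+1) := nth 0 l j.
have csl j : cs j \in l by apply/mem_nth/(leq_trans (ltn_ord j)).
have csinj : injective cs.
  move=> j1 j2 /eqP; rewrite /cs nth_uniq ?(leq_trans (ltn_ord _) lD) //.
  by move=> /eqP /val_inj.
have kzk j : (kz (cs j)).1 = k by case: (lkey _ (csl j)).
have kzd j : msize (kz (cs j)).2 = d by case: (lkey _ (csl j)).
have [lam lam0 zdep] := msize_le_lin_dep (fun j => eq_leq (kzd j)).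
apply: noc; apply: (prime_ideal_lin_dep_XsubC Mprime csinj lam0 zdep (pk := p ^+ k)).
  by move=> j; rewrite -(kzk j); apply: Mkz.
by apply: Mp; exists k.
Qed.

(* A maximal ideal avoiding the powers of [p] contains every [X_i - a_i], so it
   is the ideal of the point [a], a zero of [I] at which [p] does not vanish. *)
Theorem nullstellensatz (I : P -> Prop) (p : P) : is_ideal I ->
  (forall a, (forall q, I q -> q.@[a] = 0) -> p.@[a] = 0) -> exists k, I (p ^+ k).
Proof.
move=> idI pI; apply: NNPP => nopow.
have avI : avoiding I (powers p) I.
  by do 2 split=> //; move=> s [k ->] Ipk; apply: nopow; exists k.
have [M Mmax] := maximal_avoiding_exists avI.
have [a Ma] := choice _ (fun i => maximal_avoiding_XsubC i Mmax).
case: Mmax => [[idM [IM Mp]] _].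
have M1 : ~ M 1 by apply: Mp; apply: powers1.
have Mcong := ideal_cong_meval idM Ma.
have Ia0 q : I q -> q.@[a] = 0.
  move=> Iq; apply: NNPP => /eqP qa0; apply: M1.
  rewrite -(rmorph1 (@mpolyC N CC)) -(mulVf qa0) rmorphM /=; apply: (idealMl idM).
  by rewrite -(subKr q (_%:MP)); apply: (idealB idM (IM _ Iq) (Mcong q)).
apply: (Mp p); first by exists 1%N; rewrite expr1.
by have := Mcong p; rewrite (pI a Ia0) rmorph0 subr0.
Qed.

Corollary weak_nullstellensatz (I : P -> Prop) : is_ideal I ->
  (forall a, ~ forall q, I q -> q.@[a] = 0) -> I 1.
Proof.
move=> idI noa; have [k] := @nullstellensatz I 1 idI (fun a Ia => False_ind _ (noa a Ia)).
by rewrite expr1n.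
Qed.

End Nullstellensatz.

(** * Constant trajectories *)

Section ConstantTrajectory.
Variables (n m : nat) (a : 'I_(n + m) -> CC).

(* On the constant trajectory [a], [v^(0) = a v] and all higher derivatives vanish. *)
Definition const_val (w : DVar n m) : CC := if w.2 == 0%N then a w.1 else 0.

Definition const_mval (k : DMonom n m) : CC := \prod_(w <- finsupp k) const_val w ^+ k w.

Lemma const_mval_wide (k : DMonom n m) (d : {fset DVar n m}) : (finsupp k `<=` d)%fset ->
  const_mval k = \prod_(w <- d) const_val w ^+ k w.
Proof.
move=> kd; apply: big_fset_incl => // w _.
by rewrite -cmE_neq0 negbK => /eqP ->; rewrite expr0.
Qed.

Lemma const_mval_mmorphism : mmorphism const_mval.
Proof.
split; last by rewrite /const_mval mdom1 big_seq_fset0.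
move=> k1 k2; set d := (finsupp k1 `|` finsupp k2)%fset.
rewrite !(@const_mval_wide _ d) ?fsubsetUl ?fsubsetUr ?mdomD // -big_split /=.
by apply: eq_bigr => w _; rewrite cmM exprD.
Qed.

HB.instance Definition _ :=
  monalg.isMultiplicative.Build (DMonom n m) CC const_mval const_mval_mmorphism.

Definition const_eval (q : DPoly n m) : CC := monalg.mmap idfun const_mval q.

Lemma const_evalD x y : const_eval (x + y) = const_eval x + const_eval y.
Proof. exact: raddfD. Qed.

Lemma const_evalB x y : const_eval (x - y) = const_eval x - const_eval y.
Proof. exact: raddfB. Qed.

Lemma const_evalM x y : const_eval (x * y) = const_eval x * const_eval y.
Proof. exact: rmorphM. Qed.

Lemma const_eval1 : const_eval 1 = 1.
Proof. exact: rmorph1. Qed.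

Lemma const_eval_dvar v p : const_eval (dvar v p) = const_val (v, p).
Proof.
rewrite /const_eval /dvar mmapU /= mul1r /const_mval mdomU.
by rewrite big_seq_fset1 (cmUU (v, p)) expr1.
Qed.

Lemma const_eval_dconst c : const_eval (dconst n m c) = c.
Proof. by rewrite /const_eval /dconst mmapU /= (mmorph1 const_mval) mulr1. Qed.

Lemma const_eval_iotaD p : const_eval (Defs.iotaD p) = p.@[a].
Proof.
rewrite /const_eval /Defs.iotaD /mpoly.mmap mevalE raddf_sum /=; apply: eq_bigr => k _.
rewrite rmorphM /= -/(const_eval _) const_eval_dconst rmorph_prod /=; congr (_ * _).
by apply: eq_bigr => i _; rewrite rmorphXn /= -/(const_eval _) const_eval_dvar.
Qed.

Lemma const_eval_delta q : const_eval (delta q) = 0.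
Proof.
rewrite /const_eval /delta [monalg.mmap (dconst _ _) _ _]monalg.mmapE raddf_sum /=.
apply: big1 => k _.
rewrite rmorphM /= /dmonom raddf_sum /= big1 ?mulr0 // => w _.
rewrite rmorphM /= [X in _ * X](_ : _ = const_val (w.1, w.2.+1)) ?mulr0 //.
exact: const_eval_dvar.
Qed.

Lemma const_eval_ideal : is_ideal (fun q => const_eval q = 0).
Proof.
split; first exact: raddf0.
split=> [x y x0 y0|x y y0]; last by rewrite const_evalM y0 mulr0.
by rewrite const_evalD x0 y0 addr0.
Qed.

Lemma dideal_sys_const (f : 'I_n -> mpoly.mpoly (n + m) CC)
    (G : mpoly.mpoly (n + m) CC -> Prop) :
  (forall j, (f j).@[a] = 0) -> (forall p, G p -> p.@[a] = 0) -> ~ dideal_sys f G 1.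
Proof.
move=> fa0 Ga0 /(_ _ const_eval_ideal) one0.
suff : const_eval 1 = 0 by rewrite const_eval1 => /eqP; rewrite oner_eq0.
apply: one0 => [q _|q [[j ->]|[p [Gp ->]]]]; first exact: const_eval_delta.
  by rewrite const_evalB const_eval_iotaD fa0 const_eval_dvar subr0.
by rewrite const_eval_iotaD Ga0.
Qed.
End ConstantTrajectory.

(** * Tangent vectors at isolated points *)

Section Points.
Variable N : nat.
Local Notation P := {mpoly CC[N]}.

Lemma vanishing_ideal (V : ('I_N -> CC) -> Prop) : is_ideal (vanishing V).
Proof.
split; first by move=> c _; rewrite meval0.
split=> [p q p0 q0 c Vc|p q q0 c Vc]; first by rewrite mevalD p0 // q0 // addr0.
by rewrite mevalM q0 // mulr0.
Qed.

Lemma meval_eq0_prime (a : 'I_N -> CC) : prime_ideal (fun q : P => q.@[a] = 0).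
Proof.
split.
  split; first exact: meval0.
  split=> [p q p0 q0|p q q0]; first by rewrite mevalD p0 q0 addr0.
  by rewrite mevalM q0 mulr0.
split; first by rewrite meval1; apply/eqP; rewrite oner_eq0.
by move=> p q /eqP; rewrite mevalM mulf_eq0 => /orP [] /eqP; [left|right].
Qed.

(* [a] is isolated: otherwise a prime avoiding every [s * (x_v - a_v)^k] with
   [s(a) <> 0] would lie strictly inside the maximal ideal of [a]. *)
Lemma zero_dim_isolated (V : ('I_N -> CC) -> Prop) (a : 'I_N -> CC) (v : 'I_N) :
  variety_dim_le V 0 -> V a ->
  exists s k, s.@[a] != 0 /\ vanishing V (s * ('X_v - (a v)%:MP) ^+ k).
Proof.
move=> dimV Va; apply: NNPP => noS.
pose x : P := 'X_v - (a v)%:MP.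
pose S t := exists s k, s.@[a] != 0 /\ t = s * x ^+ k.
have S1 : S 1 by exists 1, 0%N; rewrite meval1 oner_eq0 expr0 mulr1.
have SM t1 t2 : S t1 -> S t2 -> S (t1 * t2).
  move=> [s1 [k1 [s1a ->]]] [s2 [k2 [s2a ->]]]; exists (s1 * s2), (k1 + k2)%N.
  by rewrite mevalM mulf_neq0 // exprD mulrACA.
have avV : avoiding (vanishing V) S (vanishing V).
  split; first exact: vanishing_ideal.
  by split=> // _ [s [k [sa ->]]] Vsx; apply: noS; exists s, k.
have [M Mmax] := maximal_avoiding_exists avV.
have Mprime := maximal_avoiding_prime S1 SM Mmax.
case: Mmax => [[_ [VM MS]] _].
apply: dimV; exists (fun k => if k == 0%N then M else fun q => q.@[a] = 0); split.
  move=> k _; case: (k == 0%N) => //; split => [|q Vq]; [exact: meval_eq0_prime | exact: Vq].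
move=> k; rewrite ltnS leqn0 => /eqP -> /=; split.
  move=> q Mq; apply: NNPP => /eqP qa; apply: (MS q) => //.
  by exists q, 0%N; rewrite expr0 mulr1.
exists x; split; first by rewrite mevalB mevalXU mevalC subrr.
by apply: MS; exists 1, 1%N; rewrite meval1 oner_eq0 expr1 mul1r.
Qed.
End Points.

Section DirectionalDerivative.
Variables (N : nat) (a b : 'I_N -> CC).
Local Notation P := {mpoly CC[N]}.

Definition dderiv (p : P) : CC := \sum_v (mderiv v p).@[a] * b v.

Lemma dderivD p q : dderiv (p + q) = dderiv p + dderiv q.
Proof. by rewrite -big_split; apply: eq_bigr => v _; rewrite mderivD mevalD mulrDl. Qed.

Lemma dderivM p q : dderiv (p * q) = p.@[a] * dderiv q + q.@[a] * dderiv p.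
Proof.
rewrite /dderiv !mulr_sumr -big_split; apply: eq_bigr => v _ /=.
rewrite mderivM mevalD !mevalM mulrDl addrC.
by congr (_ + _); rewrite -mulrA // mulrCA.
Qed.

Lemma dderivC c : dderiv c%:MP = 0.
Proof. by apply: big1 => v _; rewrite mderivC meval0 mul0r. Qed.

Lemma dderivX v : dderiv 'X_v = b v.
Proof.
rewrite /dderiv (bigD1 v) //= big1 => [|w wv]; last first.
  by rewrite mderivX mnm1E eq_sym (negbTE wv) scale0r meval0 mul0r.
rewrite mderivX mnm1E eqxx -{1}[U_(v)%MM]add0m addmK mpolyX0 scale1r meval1.
by rewrite mul1r addr0.
Qed.

Definition jet_vanishes (p : P) : Prop := p.@[a] = 0 /\ dderiv p = 0.

Lemma jet_vanishes_ideal : is_ideal jet_vanishes.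
Proof.
split; first by rewrite /jet_vanishes -(rmorph0 (@mpolyC N CC)) mevalC dderivC.
split=> [p q [p0 dp0] [q0 dq0]|p q [q0 dq0]].
  by rewrite /jet_vanishes mevalD dderivD p0 dp0 q0 dq0 addr0.
by rewrite /jet_vanishes mevalM dderivM q0 dq0 mulr0 mul0r addr0.
Qed.

(* With [x := X_v - a_v] and [s] as in [zero_dim_isolated], [s x] lies in the
   radical ideal [J], and its derivative at [a] along [b] is [s(a) b_v]. *)
Lemma dderiv_zero_dim (J : P -> Prop) (v : 'I_N) :
  is_ideal J -> (forall p k, J (p ^+ k) -> J p) ->
  variety_dim_le (zeroset J) 0 -> zeroset J a ->
  (forall p, J p -> dderiv p = 0) -> b v = 0.
Proof.
move=> idJ Jrad dimJ Ja dJ.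
pose x : P := 'X_v - (a v)%:MP.
have [s [k [sa Vsx]]] := zero_dim_isolated v dimJ Ja.
have Vsx1 c : zeroset J c -> (s * x).@[c] = 0.
  move=> /Vsx /eqP; rewrite !mevalM rmorphXn mulf_eq0 expf_eq0.
  by case/orP => [/eqP ->|/andP [_ /eqP ->]]; rewrite ?mul0r ?mulr0.
have [k' /Jrad /dJ] := nullstellensatz idJ Vsx1.
rewrite dderivM dderivD -rmorphN dderivC dderivX addr0 => /eqP.
rewrite mevalB mevalXU mevalC subrr mul0r addr0 mulf_eq0 (negbTE sa).
by move/eqP.
Qed.
End DirectionalDerivative.

(** * The sequence of ideals *)

Section System.
Variables (n m s : nat) (f : 'I_n -> mpoly.mpoly (n + m) CC).
Variable g : 'I_s -> mpoly.mpoly (n + m) CC.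

Lemma dideal_sys_mono (G G' : mpoly.mpoly (n + m) CC -> Prop) q :
  (forall p, G p -> ideal_gen G' p) -> dideal_sys f G q -> dideal_sys f G' q.
Proof.
move=> GG' Gq J idJ dJ G'J; apply: Gq => // r [xf|[p [Gp ->]]]; first by apply: G'J; left.
rewrite /Defs.iotaD; apply: (ideal_gen_rmorph idJ) (GG' _ Gp) => p' G'p'.
by apply: G'J; right; exists p'.
Qed.

Lemma Iseq_radical i p k : Iseq f g i (p ^+ k) -> Iseq f g i p.
Proof. by case: i => [|i] /= [k' Ipk]; exists (k * k')%N; rewrite exprM. Qed.

Lemma Iseq_succ i p : Iseq f g i p -> Iseq f g i.+1 p.
Proof.
move=> Ip; exists 1%N; rewrite expr1; apply: mem_ideal_gen.
by exists p; split => //; left.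
Qed.

Lemma Iseq_gen i k : Iseq f g i (g k).
Proof.
elim: i => [|i /Iseq_succ //]; exists 1%N; rewrite expr1.
by apply: mem_ideal_gen; exists k.
Qed.

Lemma Iseq_no_jet_solution rho (a b : 'I_(n + m) -> CC) :
  dideal_sys f (fun p => exists k, p = g k) 1 ->
  is_ideal (Iseq f g rho) -> variety_dim_le (zeroset (Iseq f g rho)) 0 ->
  (forall p, Iseq f g rho p -> jet_vanishes a b p) ->
  (forall j, b (xvar m j) = (f j).@[a]) -> False.
Proof.
move=> one_in idI dimI jet bx.
have b0 v : b v = 0.
  apply: (dderiv_zero_dim (a := a) v idI (@Iseq_radical rho) dimI).
    by move=> p /jet [].
  by move=> p /jet [].
apply: (dideal_sys_const (a := a) _ _ one_in) => [j|_ [k ->]].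
  by rewrite -bx b0.
by case: (jet _ (Iseq_gen rho k)).
Qed.

Lemma meval_iota2 (pt : 'I_(n + m + (n + m)) -> CC) p :
  (iota2 p).@[pt] = p.@[fun v => pt (lshift (n + m) v)].
Proof.
rewrite /iota2 /mpoly.mmap [RHS]mevalE rmorph_sum; apply: eq_bigr => k _.
rewrite rmorphM /= mevalC rmorph_prod; congr (_ * _); apply: eq_bigr => i _.
by rewrite rmorphXn /= mevalXU.
Qed.

Lemma meval_dot2 (pt : 'I_(n + m + (n + m)) -> CC) p :
  (dot2 p).@[pt] =
  dderiv (fun v => pt (lshift (n + m) v)) (fun v => pt (rshift (n + m) v)) p.
Proof.
rewrite /dot2 rmorph_sum; apply: eq_bigr => v _.
by rewrite rmorphM /= meval_iota2 /dvar2 mevalXU.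
Qed.
End System.

Theorem proposition4p6 (n m s : nat)
  (f : 'I_n -> mpoly.mpoly (n + m) CC) (g : 'I_s -> mpoly.mpoly (n + m) CC) :
  (* 1 \in [x' - f, g] in C{x,u} *)
  dideal_sys f (fun p => exists k, p = g k) 1 ->
  (* V(g) is nonempty *)
  (exists a : 'I_(n + m) -> CC, forall k, (g k).@[a] = 0) ->
  forall rho : nat,
  (* rho = min { i | dim V(I_i) <= 0 } *)
  variety_dim_le (zeroset (Iseq f g rho)) 0 ->
  (forall j, (j < rho)%N -> ~ variety_dim_le (zeroset (Iseq f g j)) 0) ->
  (forall i, (i <= rho)%N ->
     forall gi : seq (mpoly.mpoly (n + m) CC),
       (forall p, Iseq f g i p <-> ideal_gen (fun q => q \in gi) p) ->
       dideal_sys f (fun p => p \in gi) 1)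
  /\
  (forall grho : seq (mpoly.mpoly (n + m) CC),
     (forall p, Iseq f g rho p <-> ideal_gen (fun q => q \in grho) p) ->
     ideal_gen (fun q : mpoly.mpoly ((n + m) + (n + m)) CC =>
          (exists j : 'I_n, q = dvar2 (xvar m j) - iota2 (f j))
       \/ (exists p, p \in grho /\ q = iota2 p)
       \/ (exists p, p \in grho /\ q = dot2 p)) 1).
Proof.
move=> one_in _ rho dim_rho _; split.
  move=> i _ gi gen_i; apply: (dideal_sys_mono _ one_in) => p [k ->].
  by apply/gen_i; apply: Iseq_gen.
move=> grho gen_rho.
apply: weak_nullstellensatz; first exact: ideal_gen_ideal.
move=> pt pt0; pose a v := pt (lshift (n + m) v); pose b v := pt (rshift (n + m) v).
have jet p : Iseq f g rho p -> jet_vanishes a b p.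
  move=> /gen_rho; apply: ideal_gen_min; first exact: jet_vanishes_ideal.
  move=> q q_in; split.
    by rewrite -meval_iota2; apply/pt0/mem_ideal_gen; right; left; exists q.
  by rewrite -meval_dot2; apply/pt0/mem_ideal_gen; right; right; exists q.
have bx j : b (xvar m j) = (f j).@[a].
  have := pt0 (dvar2 (xvar m j) - iota2 (f j))
    (mem_ideal_gen (or_introl (ex_intro _ j erefl))).
  by rewrite mevalB meval_iota2 /dvar2 mevalXU => /eqP; rewrite subr_eq0 => /eqP.
apply: (Iseq_no_jet_solution one_in _ dim_rho jet bx).
exact: is_ideal_eq gen_rho (ideal_gen_ideal _).
Qed.
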